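(* Let $T>0$ and let $a\in C[0,1]$ with $a>0$ on $(0,1]$, $a(0)=0$ and $x\mapsto x/a(x)$ integrable, so that $p(x)=\int_0^x\frac{y}{a(y)}e^{y^2}dy$ is bounded on $[0,1]$ with $\|p\|_{L^\infty(0,1)}>0$. Let $\sigma\in C^2([0,1])$ with $\sigma>0$ in $(0,1)$, $\sigma(0)=\sigma(1)=0$, and choose $\beta=4$, $\rho>\frac{\ln 2}{\|\sigma\|_\infty}$, and $$\lambda\in\Big[\frac{e^{2\rho\|\sigma\|_\infty}-1}{(\beta-1)\|p\|_{L^\infty(0,1)}},\ \frac{2(e^{2\rho\|\sigma\|_\infty}-e^{\rho\|\sigma\|_\infty})}{(\beta-1)\|p\|_{L^\infty(0,1)}}\Big).$$ Let $T^*=(1+\varepsilon)\frac T2$ with $\varepsilon\in\big(0,\sqrt{1-\tfrac{2\sqrt2}{3}}\big)$. Then $$2\big(\hat\phi(0)-\check\phi(T^* )+\hat\Phi(0)\big)<0.$$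
   Context: $\theta(t)=\frac{1}{[t(T-t)]^2}$; $\nu(t)=\theta(T/2)$ on $[0,T/2]$, $\nu(t)=\theta(t)$ on $[T/2,T]$; $\psi(x)=\lambda(p(x)-\beta\|p\|_{L^\infty(0,1)})$; $\Psi(x)=e^{\rho\sigma(x)}-e^{2\rho\|\sigma\|_\infty}$; $\tilde\phi(t,x)=\nu(t)\psi(x)$, $\tilde\Phi(t,x)=\nu(t)\Psi(x)$; $\hat\phi(t)=\max_{x\in[0,1]}\tilde\phi(t,x)$, $\check\phi(t)=\min_{x\in[0,1]}\tilde\phi(t,x)$, $\hat\Phi(t)=\max_{x\in[0,1]}\tilde\Phi(t,x)$. *)

From HB Require Import structures.
From mathcomp Require Import all_boot all_order all_algebra.
From mathcomp Require Import all_classical all_reals all_analysis.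
Set Implicit Arguments. Unset Strict Implicit. Unset Printing Implicit Defensive.
Import Order.TTheory GRing.Theory Num.Theory.
Import numFieldNormedType.Exports.
Local Open Scope classical_set_scope.
Local Open Scope ring_scope.

Section Defs.
Variable R : realType.

(* sup norm on [0,1] (= L^infty(0,1) norm for the continuous functions used) *)
Definition supnorm01 (f : R -> R) : R := sup [set `|f x| | x in `[0, 1]].

Definition pfun (a : R -> R) (x : R) : R :=
  Rintegral (@lebesgue_measure R) `[0, x] (fun y => y / a y * expR (y ^+ 2)).

Definition theta (T t : R) : R := 1 / (t * (T - t)) ^+ 2.
Definition nu (T t : R) : R := if t <= T / 2 then theta T (T / 2) else theta T t.

Definition psi (a : R -> R) (lam beta x : R) : R :=
  lam * (pfun a x - beta * supnorm01 (pfun a)).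
Definition Psi (sig : R -> R) (rho x : R) : R :=
  expR (rho * sig x) - expR (2 * rho * supnorm01 sig).

Definition phi_tilde a lam beta T t x := nu T t * psi a lam beta x.
Definition Phi_tilde sig rho T t x := nu T t * Psi sig rho x.

Definition phi_hat a lam beta T t : R := sup [set phi_tilde a lam beta T t x | x in `[0, 1]].
Definition phi_check a lam beta T t : R := inf [set phi_tilde a lam beta T t x | x in `[0, 1]].
Definition Phi_hat sig rho T t : R := sup [set Phi_tilde sig rho T t x | x in `[0, 1]].
End Defs.

From HB Require Import structures.
From mathcomp Require Import all_boot all_order all_algebra.
From mathcomp Require Import all_classical all_reals all_analysis.
From mathcomp Require Import ring lra.
Import Order.TTheory GRing.Theory Num.Theory.
Import numFieldNormedType.Exports.
Local Open Scope classical_set_scope.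
Local Open Scope ring_scope.

(* At t = 0 both weights equal nu(0) = theta(T/2), and at T* = (1+eps)T/2 the
   weight is nu(0)/(1-eps^2)^2 < (9/8) nu(0).  With 0 <= p <= |p|_oo this gives
   phi_hat(0) <= -3 nu(0) lam |p|_oo, phi_check at T* is >= -4 nu(T* ) lam |p|_oo,
   and Phi_hat(0) <= nu(0) (e^{rho|sig|} - e^{2rho|sig|}), so the sum is below
   nu(0) (3/2 lam |p|_oo - (e^{2rho|sig|} - e^{rho|sig|})), which the upper
   bound on lam makes negative. *)

Section SupNorm.
Context {R : realType}.
Implicit Types f : R -> R.

(* [sup] is [0] on sets without a supremum, so a nonzero sup norm certifies
   that [f] is bounded on [0, 1]. *)
Lemma supnorm01_ub [f x] : supnorm01 f != 0 -> 0 <= x <= 1 -> `|f x| <= supnorm01 f.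
Proof.
move=> f_bnd x01; apply: sup_upper_bound; last by exists x; rewrite // in_itv.
apply/not_notP => /sup_out f_unbnd; move: f_bnd; by rewrite /supnorm01 f_unbnd eqxx.
Qed.

Lemma supnorm01_ge0 f : 0 <= supnorm01 f.
Proof.
have [f_bnd|/sup_out f_unbnd] := pselect (has_sup [set `|f x| | x in `[0, 1]]).
  apply: le_trans (normr_ge0 (f 0)) _; apply: sup_upper_bound => //.
  by exists 0 => //; rewrite /= in_itv /= lexx ler01.
by rewrite /supnorm01 f_unbnd.
Qed.

Lemma sup_image01_le (g : R -> R) (M : R) :
  (forall x, 0 <= x <= 1 -> g x <= M) -> sup [set g x | x in `[0, 1]] <= M.
Proof.
move=> gM; apply: ge_sup; first by exists (g 0), 0; rewrite //= in_itv /= lexx ler01.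
by move=> _ [x x01 <-]; apply: gM; rewrite /= in_itv in x01.
Qed.

Lemma inf_image01_ge (g : R -> R) (m : R) :
  (forall x, 0 <= x <= 1 -> m <= g x) -> m <= inf [set g x | x in `[0, 1]].
Proof.
move=> mg; apply: lb_le_inf; first by exists (g 0), 0; rewrite //= in_itv /= lexx ler01.
by move=> _ [x x01 <-]; apply: mg; rewrite /= in_itv in x01.
Qed.

End SupNorm.

Section Weights.
Context {R : realType}.
Implicit Types T t e : R.

Lemma nu_ge0 T t : 0 <= nu T t.
Proof. by rewrite /nu /theta; case: ifP => _; rewrite div1r invr_ge0 sqr_ge0. Qed.

Lemma nu0_gt0 T : 0 < T -> 0 < nu T 0.
Proof.
move=> T_gt0; rewrite /nu ifT; last by rewrite divr_ge0 ?ltW.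
by rewrite /theta divr_gt0 // exprn_gt0 // mulr_gt0; lra.
Qed.

Lemma nu_dilate T e : 0 < T -> 0 < e < 1 ->
  nu T ((1 + e) * (T / 2)) = nu T 0 / (1 - e ^+ 2) ^+ 2.
Proof.
move=> T_gt0 /andP[e_gt0 e_lt1].
have half_lt : T / 2 < (1 + e) * (T / 2) by nra.
have half_ge0 : 0 <= T / 2 by lra.
rewrite /nu half_ge0 leNgt half_lt /= /theta; field.
by rewrite !gt_eqF //; nra.
Qed.

End Weights.

Section ParameterWindow.
Context {R : realType}.

(* The constant comes from (2 sqrt 2 / 3)^2 = 8/9. *)
Lemma small_eps_bounds [e : R] : 0 < e -> e < Num.sqrt (1 - 2 * Num.sqrt 2 / 3) ->
  e < 1 /\ 8 / 9 < (1 - e ^+ 2) ^+ 2.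
Proof.
move=> e_gt0 e_lt.
have sqrt2_ge0 : 0 <= Num.sqrt (2 : R) by rewrite sqrtr_ge0.
have sqrt2_sq : Num.sqrt (2 : R) ^+ 2 = 2 by rewrite sqr_sqrtr.
have bound_gt0 : 0 < 1 - 2 * Num.sqrt (2 : R) / 3 by nra.
have bound_sq : Num.sqrt (1 - 2 * Num.sqrt (2 : R) / 3) ^+ 2 = 1 - 2 * Num.sqrt 2 / 3.
  by rewrite sqr_sqrtr ?ltW.
have e_sq_lt : e ^+ 2 < 1 - 2 * Num.sqrt 2 / 3 by nra.
by split; nra.
Qed.

(* Division by zero yields zero, so the window for [lam] is empty when [P = 0]
   or [S = 0]. *)
Lemma lam_window_bounds [P S rho lam : R] : 0 <= P -> 0 <= S -> ln 2 / S < rho ->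
  (expR (2 * rho * S) - 1) / ((4 - 1) * P) <= lam ->
  lam < 2 * (expR (2 * rho * S) - expR (rho * S)) / ((4 - 1) * P) ->
  [/\ 0 < P, 0 < S, 0 < rho, 0 < lam
    & 3 * (lam * P) < 2 * (expR (2 * rho * S) - expR (rho * S))].
Proof.
move=> P_ge0 S_ge0 rho_gt lam_ge lam_lt.
have P_gt0 : 0 < P.
  rewrite lt_neqAle P_ge0 andbT eq_sym; apply/eqP => P0.
  by move: lam_ge lam_lt; rewrite P0 mulr0 invr0 !mulr0; lra.
have S_gt0 : 0 < S.
  rewrite lt_neqAle S_ge0 andbT eq_sym; apply/eqP => S0.
  by move: lam_ge lam_lt; rewrite S0 !mulr0 expR0 subrr !mul0r; lra.
have rho_gt0 : 0 < rho by apply: lt_trans rho_gt; rewrite divr_gt0 // ln_gt0 //; lra.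
have E2_gt1 : 1 < expR (2 * rho * S) by rewrite expR_gt1 !mulr_gt0.
split => //; first by apply: lt_le_trans lam_ge; rewrite divr_gt0 ?mulr_gt0 //; lra.
by move: lam_lt; rewrite ltr_pdivlMr ?mulr_gt0 //; congr (_ < _); ring.
Qed.

End ParameterWindow.

Section WeightedBounds.
Context {R : realType}.
Implicit Types (a sig : R -> R) (lam beta rho T t : R).

Lemma pfun_ge0 a x : (forall y, 0 <= y <= x -> 0 <= a y) -> 0 <= pfun a x.
Proof.
move=> a_ge0; apply: fine_ge0; apply: integral_ge0 => y.
rewrite /= in_itv /= => y0x; rewrite lee_fin mulr_ge0 ?expR_ge0 // divr_ge0 ?a_ge0 //.
by case/andP: y0x.
Qed.

Lemma pfun01_ge0 [a] : (forall x, 0 < x <= 1 -> 0 < a x) -> a 0 = 0 ->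
  forall x, 0 <= x <= 1 -> 0 <= pfun a x.
Proof.
move=> a_gt0 a0 x /andP[_ x_le1]; apply: pfun_ge0 => y /andP[y_ge0 y_lex].
have [->|y_neq0] := eqVneq y 0; first by rewrite a0.
by rewrite ltW // a_gt0 // lt_neqAle eq_sym y_neq0 y_ge0 (le_trans y_lex).
Qed.

Lemma phi_hat_le a lam beta T t : 0 <= lam -> supnorm01 (pfun a) != 0 ->
  phi_hat a lam beta T t <= nu T t * (lam * ((1 - beta) * supnorm01 (pfun a))).
Proof.
move=> lam_ge0 p_bnd; apply: sup_image01_le => x x01.
rewrite /phi_tilde /psi ler_wpM2l ?nu_ge0 // ler_wpM2l // mulrBl mul1r lerD2r.
exact: le_trans (real_ler_norm (num_real _)) (supnorm01_ub p_bnd x01).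
Qed.

Lemma phi_check_ge a lam beta T t : 0 <= lam ->
  (forall x, 0 <= x <= 1 -> 0 <= pfun a x) ->
  nu T t * (lam * (- beta * supnorm01 (pfun a))) <= phi_check a lam beta T t.
Proof.
move=> lam_ge0 p_ge0; apply: inf_image01_ge => x x01.
by rewrite /phi_tilde /psi ler_wpM2l ?nu_ge0 // ler_wpM2l // mulNr lerDr p_ge0.
Qed.

Lemma Phi_hat_le sig rho T t : 0 <= rho -> supnorm01 sig != 0 ->
  Phi_hat sig rho T t
    <= nu T t * (expR (rho * supnorm01 sig) - expR (2 * rho * supnorm01 sig)).
Proof.
move=> rho_ge0 sig_bnd; apply: sup_image01_le => x x01.
rewrite /Phi_tilde /Psi ler_wpM2l ?nu_ge0 // lerD2r ler_expR ler_wpM2l //.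
exact: le_trans (real_ler_norm (num_real _)) (supnorm01_ub sig_bnd x01).
Qed.

End WeightedBounds.

Theorem mainTheorem8 (R : realType) (T : R) (a sig : R -> R) (rho lam eps : R) :
  0 < T ->
  {within `[0, 1], continuous a} ->
  (forall x, 0 < x <= 1 -> 0 < a x) ->
  a 0 = 0 ->
  (@lebesgue_measure R).-integrable `[0, 1] (fun x => (x / a x)%:E) ->
  {in `]0, 1[, forall x, derivable sig x 1} ->
  {in `]0, 1[, forall x, derivable (derive1 sig) x 1} ->
  {within `[0, 1], continuous sig} ->
  (exists d1 d2 : R -> R,
     {within `[0, 1], continuous d1} /\ {within `[0, 1], continuous d2} /\
     {in `]0, 1[, forall x, derive1 sig x = d1 x} /\
     {in `]0, 1[, forall x, derive1 (derive1 sig) x = d2 x}) ->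
  (forall x, 0 < x < 1 -> 0 < sig x) ->
  sig 0 = 0 -> sig 1 = 0 ->
  ln 2 / supnorm01 sig < rho ->
  (expR (2 * rho * supnorm01 sig) - 1) / ((4 - 1) * supnorm01 (pfun a)) <= lam ->
  lam < 2 * (expR (2 * rho * supnorm01 sig) - expR (rho * supnorm01 sig))
          / ((4 - 1) * supnorm01 (pfun a)) ->
  0 < eps -> eps < Num.sqrt (1 - 2 * Num.sqrt 2 / 3) ->
  let Tstar := (1 + eps) * (T / 2) in
  2 * (phi_hat a lam 4 T 0 - phi_check a lam 4 T Tstar + Phi_hat sig rho T 0) < 0.
Proof.
move=> T_gt0 _ a_gt0 a0 _ _ _ _ _ _ _ _ rho_gt lam_ge lam_lt eps_gt0 eps_lt /=.
have [P_gt0 S_gt0 rho_gt0 lam_gt0 lamP_lt] :=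
  lam_window_bounds (supnorm01_ge0 _) (supnorm01_ge0 _) rho_gt lam_ge lam_lt.
have [eps_lt1 dilation_gt] := small_eps_bounds eps_gt0 eps_lt.
have hat := phi_hat_le a lam 4 T 0 (ltW lam_gt0) (lt0r_neq0 P_gt0).
have check := phi_check_ge a lam 4 T ((1 + eps) * (T / 2)) (ltW lam_gt0)
  (pfun01_ge0 a_gt0 a0).
have Hat := Phi_hat_le sig rho T 0 (ltW rho_gt0) (lt0r_neq0 S_gt0).
rewrite nu_dilate ?eps_gt0 // in check.
have nu0_pos : 0 < nu T 0 by exact: nu0_gt0.
set w := ((1 - eps ^+ 2) ^+ 2)^-1 in check.
have w_lt : w < 9 / 8 by rewrite -[9 / 8]invf_div ltf_pV2 ?posrE; nra.
set L := lam * supnorm01 (pfun a) in lamP_lt.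
set E1 := expR (rho * supnorm01 sig) in lamP_lt Hat.
set E2 := expR (2 * rho * supnorm01 sig) in lamP_lt Hat.
have : nu T 0 * ((1 - 4) * L + 4 * w * L + (E1 - E2)) < 0.
  have slack : 0 < (9 / 8 - w) * L by rewrite !mulr_gt0 // subr_gt0.
  by rewrite pmulr_rlt0 //; lra.
rewrite /L; lra.
Qed.
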